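(* Let $q$ be a prime power, $l\ge1$, $t=q^l$, $G_1(x)=x^{t-1}+1$, $G_2(x)=x^t+x$, and $L_1^*=\{\alpha\in GF(t^2):\ \alpha\neq0,\ G_1(\alpha)\ne0\}$. Then the $q$-ary Goppa codes $\Gamma_2^{(q-1)}=\Gamma(L_1^*,G_2^{q-1})$ and $\Gamma_1^{*(q-1)}=\Gamma(L_1^*,G_1^{q-1})$ have equal parity-check matrices, i.e., they coincide as codes.
   Context: For a set $L=\{\alpha_1,\dots,\alpha_n\}$ of distinct elements of $GF(t^2)$ and $P\in GF(t^2)[x]$ with $P(\alpha_k)\neq0$ for all $k$, the $q$-ary Goppa code is $\Gamma(L,P)=\{c\in GF(q)^n:\ \sum_k c_k\alpha_k^s/P(\alpha_k)=0 \text{ for } s=0,\dots,\deg P-1\}$. *)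

From HB Require Import structures.
From mathcomp Require Import all_boot all_order all_algebra all_field.
Set Implicit Arguments. Unset Strict Implicit. Unset Printing Implicit Defensive.
Import GRing.Theory.
Local Open Scope ring_scope.

(* Membership in the q-ary Goppa code Gamma(L,P), where the locator set
   L = [alpha_1; ...; alpha_n] is a sequence of distinct elements of the
   field F (= GF(t^2)), and GF(q) is the subfield {x in F | x^q = x}. *)
Definition in_goppa (F : fieldType) (q : nat) (L : seq F) (P : {poly F})
    (c : seq F) : bool :=
  [&& size c == size L,
      all (fun a => a ^+ q == a) c &
      [forall s : 'I_(size P).-1,
         \sum_(k < size L) c`_k * L`_k ^+ s / P.[L`_k] == 0]].

Definition G1 (F : fieldType) (t : nat) : {poly F} := 'X^(t.-1) + 1.
Definition G2 (F : fieldType) (t : nat) : {poly F} := 'X^t + 'X.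

From HB Require Import structures.
From mathcomp Require Import all_boot all_order all_algebra all_field.
From mathcomp Require Import ring zify.
Set Implicit Arguments. Unset Strict Implicit. Unset Printing Implicit Defensive.
Import GRing.Theory.
Local Open Scope ring_scope.

(* Since G_2(x) = x^t + x = x G_1(x), the checks x^s / G_2(x)^(q-1) with
   s >= q - 1 are exactly the checks x^(s-q+1) / G_1(x)^(q-1).  For the
   remaining s < q - 1 one uses that T = x^t + x lies in GF(t) and that the
   code words have entries in GF(q), so that the q-power Frobenius commutes
   with check sums.  For 0 < s, x^s / T^(q-1) is the t-th power of
   x^(ts-q+1) / G_1(x)^(q-1); for s = 0, with y = x^(t/q) / T, one has
   1 / T^(q-1) = (y + y^t)^q, and y = x^(t/q - 1) G_1(x)^(q-2) / G_1(x)^(q-1)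
   is again a combination of checks of G_1^(q-1). *)

Lemma expr_fix_expn (R : pzSemiRingType) (q m : nat) (x : R) :
  x ^+ q = x -> x ^+ (q ^ m) = x.
Proof.
move=> xq; elim: m => [|m IHm]; first by rewrite expn0 expr1.
by rewrite expnSr exprM IHm xq.
Qed.

Lemma expr0_gt0 (R : pzSemiRingType) (n : nat) : (0 < n)%N -> (0 : R) ^+ n = 0.
Proof. by case: n => // n _; rewrite exprS mul0r. Qed.

Section WeightedSums.
Variable F : fieldType.
Implicit Types (c L : seq F) (f g : F -> F).

Definition wsum c L f : F := \sum_(k < size L) c`_k * f L`_k.

Lemma eq_wsum c L f g : {in L, f =1 g} -> wsum c L f = wsum c L g.
Proof. by move=> fg; apply: eq_bigr => k _; rewrite fg // mem_nth. Qed.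

Lemma wsumD c L f g :
  wsum c L (fun x => f x + g x) = wsum c L f + wsum c L g.
Proof. by rewrite -big_split; apply: eq_bigr => k _; rewrite mulrDr. Qed.

Lemma wsum_horner c L (d : F -> F) (N : nat) (r : {poly F}) :
    (forall s, (s < N)%N -> wsum c L (fun x => x ^+ s / d x) = 0) ->
  (size r <= N)%N -> wsum c L (fun x => r.[x] / d x) = 0.
Proof.
move=> moments0 le_rN; rewrite /wsum.
under eq_bigr do rewrite (horner_coef_wide _ le_rN) mulr_suml mulr_sumr.
rewrite exchange_big big1 // => i _.
transitivity (r`_i * wsum c L (fun x => x ^+ i / d x)).
  by rewrite mulr_sumr; apply: eq_bigr => k _; rewrite !mulrA [c`__ * _]mulrC.
by rewrite moments0 ?mulr0.
Qed.

Lemma wsum_expr_pchar c L f (n : nat) :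
    [pchar F].-nat n -> {in c, forall x, x ^+ n = x} ->
  wsum c L (fun x => f x ^+ n) = wsum c L f ^+ n.
Proof.
move=> pn cn; have n_gt0 : (0 < n)%N by case/andP: pn.
rewrite /wsum (big_morph _ (fun x y => exprDn_pchar x y pn) (expr0_gt0 _ n_gt0)).
apply: eq_bigr => k _; rewrite exprMn.
have [lt_kc | le_ck] := ltnP k (size c); first by rewrite (cn c`_k) ?mem_nth.
by rewrite nth_default // expr0_gt0.
Qed.

Definition goppa_checks c L (P : {poly F}) :=
  forall s, (s < (size P).-1)%N -> wsum c L (fun x => x ^+ s / P.[x]) = 0.

Lemma goppa_checksP c L (P : {poly F}) :
  reflect (goppa_checks c L P)
    [forall s : 'I_(size P).-1,
       \sum_(k < size L) c`_k * L`_k ^+ s / P.[L`_k] == 0].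
Proof.
have wsumE s : wsum c L (fun x => x ^+ s / P.[x])
             = \sum_(k < size L) c`_k * L`_k ^+ s / P.[L`_k].
  by apply: eq_bigr => k _; rewrite mulrA.
apply: (iffP forallP) => [checks s lt_s | checks s].
  by rewrite wsumE; apply/eqP: (checks (Ordinal lt_s)).
by rewrite -wsumE checks.
Qed.

End WeightedSums.

Section GoppaG1G2.
Variables (F : fieldType) (q l : nat).
Hypotheses (q_pchar : [pchar F].-nat q) (q_gt1 : (1 < q)%N) (l_gt0 : (0 < l)%N).
Local Notation t := (q ^ l)%N.
Local Notation E := q.-1.
Hypothesis expf_tt : forall a : F, a ^+ (t * t) = a.

Lemma pchar_nat_expn m : [pchar F].-nat (q ^ m)%N.
Proof. by rewrite pnatX q_pchar. Qed.

Lemma expn_pred_mul : (q ^ l.-1 * q = t)%N.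
Proof. by rewrite -expnSr prednK. Qed.

Lemma q_le_t : (q <= t)%N.
Proof. by rewrite -expn_pred_mul leq_pmull // expn_gt0 ltnW. Qed.

Lemma t_gt1 : (1 < t)%N.
Proof. exact: leq_trans q_gt1 q_le_t. Qed.

Lemma t_gt0 : (0 < t)%N.
Proof. exact: ltnW t_gt1. Qed.

Lemma size_G1 : size (G1 F t) = t.
Proof.
by rewrite /G1 size_polyDl ?size_polyXn ?size_poly1 prednK ?t_gt0 ?t_gt1.
Qed.

Lemma trace_G1 (a : F) : a ^+ t + a = a * (G1 F t).[a].
Proof.
by rewrite /G1 hornerD hornerXn hornerC mulrDr mulr1 -exprS prednK ?t_gt0.
Qed.

Lemma horner_G2_exp (a : F) : ((G2 F t) ^+ E).[a] = (a ^+ t + a) ^+ E.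
Proof. by rewrite horner_exp /G2 hornerD hornerXn hornerX. Qed.

Lemma trace_expt (a : F) : (a ^+ t + a) ^+ t = a ^+ t + a.
Proof. by rewrite exprDn_pchar ?pchar_nat_expn // -exprM expf_tt addrC. Qed.

Lemma exprt_div_fixed (x T : F) (s n : nat) :
  T ^+ t = T -> (x ^+ (t * s) / T ^+ n) ^+ t = x ^+ s / T ^+ n.
Proof.
move=> Tt; rewrite expr_div_n -!exprM mulnAC exprM expf_tt.
by rewrite mulnC exprM Tt.
Qed.

Lemma trace_inv_lift (a : F) : a ^+ t + a != 0 ->
  let y := a ^+ (q ^ l.-1) / (a ^+ t + a) in
  (y + y ^+ t) ^+ q = (a ^+ t + a) ^- E.
Proof.
move=> T_neq0 y; set T := a ^+ t + a; set Q := (q ^ l.-1)%N.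
have y_sum : y + y ^+ t = T ^+ Q / T.
  rewrite /y expr_div_n trace_expt -mulrDl -exprM mulnC exprM.
  by rewrite [T ^+ Q]exprDn_pchar ?pchar_nat_expn // addrC.
rewrite y_sum expr_div_n -exprM expn_pred_mul trace_expt -/T.
by rewrite -[in T ^+ q](prednK (ltnW q_gt1)) exprS invfM mulrA divff ?mul1r.
Qed.

Variables (L c : seq F).
Hypothesis L_G1 : {in L, forall a, (a != 0) && ((G1 F t).[a] != 0)}.
Hypothesis c_fix : {in c, forall x, x ^+ q = x}.

Lemma size_G1_exp : (size ((G1 F t) ^+ E)).-1 = (t.-1 * E)%N.
Proof. by rewrite size_exp size_G1. Qed.

Lemma size_G2_exp : (size ((G2 F t) ^+ E)).-1 = (t * E)%N.
Proof.
by rewrite size_exp /G2 size_polyDl ?size_polyXn ?size_polyX ?ltnS ?t_gt1.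
Qed.

Lemma shift_checks (s : nat) :
  wsum c L (fun x => x ^+ (s + E) / (x ^+ t + x) ^+ E)
  = wsum c L (fun x => x ^+ s / ((G1 F t) ^+ E).[x]).
Proof.
apply: eq_wsum => a /L_G1 /andP [a_neq0 g_neq0].
by rewrite trace_G1 exprMn horner_exp exprD invfM mulrA mulfK // expf_neq0.
Qed.

Lemma wsum_expr_t f : wsum c L (fun x => f x ^+ t) = wsum c L f ^+ t.
Proof.
by apply: wsum_expr_pchar; [exact: pchar_nat_expn | move=> x /c_fix/expr_fix_expn].
Qed.

Lemma wsum_expr_q f : wsum c L (fun x => f x ^+ q) = wsum c L f ^+ q.
Proof. exact: wsum_expr_pchar. Qed.

Section LowDegreeChecks.
Hypothesis G1_checks : goppa_checks c L ((G1 F t) ^+ E).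

Lemma trace_check_pos (s : nat) : (0 < s < E)%N ->
  wsum c L (fun x => x ^+ s / (x ^+ t + x) ^+ E) = 0.
Proof.
case/andP=> s_gt0 lt_sE.
have le_E_ts : (E <= t * s)%N.
  by rewrite (leq_trans (leq_pred q)) // (leq_trans q_le_t) // leq_pmulr.
have lt_tsE : (t * s - E < t.-1 * E)%N.
  have : (t * s < t * E)%N by rewrite ltn_pmul2l ?t_gt0.
  rewrite -[t.-1]subn1 mulnBl mul1n.
  by move: le_E_ts; move: (t * s)%N (t * E)%N => a b; lia.
rewrite (@eq_wsum _ _ _ _ (fun x => (x ^+ (t * s) / (x ^+ t + x) ^+ E) ^+ t)).
  rewrite wsum_expr_t -(subnK le_E_ts) shift_checks G1_checks; last by rewrite size_G1_exp.
  exact: expr0_gt0 t_gt0.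
by move=> a _; rewrite exprt_div_fixed ?trace_expt.
Qed.

Lemma trace_check_zero : wsum c L (fun x => (x ^+ t + x) ^- E) = 0.
Proof.
set Q := (q ^ l.-1)%N.
have Q_gt0 : (0 < Q)%N by rewrite expn_gt0 ltnW.
have Q_lt_t : (Q < t)%N by rewrite -expn_pred_mul ltn_Pmulr.
have E_gt0 : (0 < E)%N by rewrite -subn1 subn_gt0.
pose y (x : F) := x ^+ Q / (x ^+ t + x).
pose r := 'X^(Q.-1) * (G1 F t) ^+ E.-1.
have size_r : (size r <= (size ((G1 F t) ^+ E)).-1)%N.
  rewrite size_G1_exp -(prednK E_gt0) mulnS.
  apply: leq_trans (size_polyMleq _ _) _.
  have := size_poly_exp_leq (G1 F t) E.-1; rewrite size_polyXn size_G1.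
  have le_Q : (Q <= t.-1)%N by rewrite -ltnS prednK ?t_gt0.
  by move: le_Q Q_gt0; move: (size _) (t.-1 * E.-1)%N (Q) (t.-1) => a b u v; lia.
have y_sum0 : wsum c L y = 0.
  rewrite -(wsum_horner G1_checks size_r).
  apply: eq_wsum => a /L_G1 /andP [a_neq0 g_neq0].
  rewrite /y trace_G1 hornerM hornerXn !horner_exp.
  rewrite -[in a ^+ Q](prednK Q_gt0) -[in _ ^+ E](prednK E_gt0) !exprS.
  by field; rewrite expf_neq0 ?g_neq0 ?a_neq0.
rewrite (@eq_wsum _ _ _ _ (fun x => (y x + y x ^+ t) ^+ q)).
  rewrite wsum_expr_q wsumD wsum_expr_t y_sum0 (expr0_gt0 _ t_gt0) addr0.
  exact: expr0_gt0 (ltnW q_gt1).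
move=> a /L_G1 /andP [a_neq0 g_neq0].
by rewrite trace_inv_lift // trace_G1 mulf_neq0.
Qed.

End LowDegreeChecks.

Lemma G2_checks_G1_checks :
  goppa_checks c L ((G2 F t) ^+ E) <-> goppa_checks c L ((G1 F t) ^+ E).
Proof.
have tE : (t.-1 * E + E = t * E)%N by rewrite addnC -mulSn prednK ?t_gt0.
split=> checks s; rewrite ?size_G1_exp ?size_G2_exp => lt_s.
  apply: etrans (checks (s + E) _); last by rewrite size_G2_exp -tE ltn_add2r.
  by rewrite -shift_checks; apply: eq_wsum => a _; rewrite horner_G2_exp.
rewrite (@eq_wsum _ _ _ _ (fun x => x ^+ s / (x ^+ t + x) ^+ E)); last first.
  by move=> a _; rewrite horner_G2_exp.
have [le_Es | lt_sE] := leqP E s.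
  rewrite -(subnK le_Es) shift_checks checks // size_G1_exp.
  by rewrite -(ltn_add2r E) (subnK le_Es) tE.
have [-> | s_gt0] := posnP s.
  by rewrite -(trace_check_zero checks); apply: eq_wsum => a _; rewrite expr0 div1r.
by apply: (trace_check_pos checks); rewrite s_gt0.
Qed.

End GoppaG1G2.

Theorem lemma5 (p k l : nat) (F : finFieldType) (L : seq F) :
  prime p -> (0 < k)%N -> (1 <= l)%N ->
  #|F| = (((p ^ k) ^ l) ^ 2)%N ->
  uniq L ->
  (forall a : F, (a \in L) = (a != 0) && ((G1 F ((p ^ k) ^ l)%N).[a] != 0)) ->
  forall c : seq F,
    in_goppa (p ^ k)%N L ((G2 F ((p ^ k) ^ l)%N) ^+ (p ^ k).-1) c =
    in_goppa (p ^ k)%N L ((G1 F ((p ^ k) ^ l)%N) ^+ (p ^ k).-1) c.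
Proof.
move=> p_prime k_gt0 l_gt0 card_F _ memL c.
have p_char : p \in [pchar F].
  by apply: (card_finPcharP _ p_prime); rewrite card_F -!expnM.
have q_pchar : [pchar F].-nat (p ^ k)%N.
  by rewrite pnatX (eq_pnat _ (pcharf_eq p_char)) pnat_id.
have q_gt1 : (1 < p ^ k)%N by rewrite -{1}(expn0 p) ltn_exp2l ?prime_gt1.
have expf_tt (a : F) : a ^+ ((p ^ k) ^ l * (p ^ k) ^ l)%N = a.
  by rewrite mulnn -card_F expf_card.
rewrite /in_goppa; case: eqP => //= _; case: allP => //= c_fix.
have L_G1 : {in L, forall a, (a != 0) && ((G1 F ((p ^ k) ^ l)%N).[a] != 0)}.
  by move=> a; rewrite memL.
have c_fixq : {in c, forall x, x ^+ (p ^ k) = x} by move=> x /c_fix/eqP.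
have equiv := G2_checks_G1_checks q_pchar q_gt1 l_gt0 expf_tt L_G1 c_fixq.
by apply/goppa_checksP/goppa_checksP => [/equiv | /equiv].
Qed.
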